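(* Let $f:\{0,1\}^n\to\{0,1\}$ and let $\ell$ be a positive integer. The fraction of vertices of $\{0,1\}^n$ that are non-$\ell$-sticky (with respect to $f$) is at most $\frac{2\ell\cdot\mathbf{I}(f)}{n}$.
   Context: $H_n$ is the undirected hypercube graph on $\{0,1\}^n$ (edges between points at Hamming distance $1$); a random walk step moves to a uniformly random neighbor. An edge $(x,y)$ is influential if $f(x)\ne f(y)$. The total influence is $\mathbf{I}(f)=n\cdot\Pr[f(x)\neq f(y)]$ for a uniformly random edge $(x,y)$ of $H_n$. A vertex $x$ is $\ell$-sticky if an $\ell$-step random walk on $H_n$ starting from $x$ traverses no influential edge with probability at least $1/2$; otherwise $x$ is non-$\ell$-sticky. *)

From mathcomp Require Import all_boot all_order all_algebra.
Set Implicit Arguments. Unset Strict Implicit. Unset Printing Implicit Defensive.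
Import Order.TTheory GRing.Theory Num.Theory.
Local Open Scope ring_scope.

Definition cube (n : nat) := {ffun 'I_n -> bool}.

Definition flip n (x : cube n) (i : 'I_n) : cube n :=
  [ffun j => if j == i then ~~ x j else x j].

(* total influence: n * Pr[f x <> f y] for a uniformly random edge (x,y).
   A uniform edge is sampled as a uniform vertex x and uniform direction i,
   the edge being {x, flip x i} (each undirected edge arises exactly twice). *)
Definition total_influence n (f : cube n -> bool) : rat :=
  n%:R * (#|[set p : cube n * 'I_n | f p.1 != f (flip p.1 p.2)]|%:R
           / (2 ^ n * n)%:R).

Fixpoint avoids n (f : cube n -> bool) (x : cube n) (s : seq 'I_n) : bool :=
  if s is i :: s' then (f x == f (flip x i)) && avoids f (flip x i) s'
  else true.

(* probability that an l-step random walk from x crosses no influential edge: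
   the l steps are i.i.d. uniform directions in 'I_n *)
Definition stay_prob n (f : cube n -> bool) (l : nat) (x : cube n) : rat :=
  #|[set s : l.-tuple 'I_n | avoids f x s]|%:R / (n ^ l)%:R.

Definition sticky n (f : cube n -> bool) (l : nat) (x : cube n) : bool :=
  1 / 2 <= stay_prob f l x.

(* Fix a direction sequence s.  The vertices whose walk along s crosses an
   influential edge number at most sum_(i in s) c_i, where c_i counts the x with
   f x <> f (flip x i): after its first step the walk is the walk from flip x i,
   and flipping a coordinate permutes the cube.  Summing over the n^l sequences
   bounds the bad (vertex, walk) pairs by l n^(l-1) sum_i c_i = l n^(l-1) 2^n I(f),
   while every non-sticky vertex accounts for at least n^l / 2 of them. *)
From mathcomp Require Import all_boot all_order all_algebra.
From mathcomp Require Import zify ring lra.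
Import Order.TTheory GRing.Theory Num.Theory.
Set Implicit Arguments. Unset Strict Implicit.

Lemma sum_tuple_cons (T : finType) m (G : m.+1.-tuple T -> nat) :
  \sum_(t : m.+1.-tuple T) G t = \sum_(i : T) \sum_(s : m.-tuple T) G [tuple of i :: s].
Proof.
rewrite pair_big /= (reindex (fun p : T * m.-tuple T => [tuple of p.1 :: p.2])) //=.
exists (fun t => (thead t, [tuple of behead t])).
- by move=> [i s] _ /=; rewrite theadE; congr pair; apply/val_inj.
- by move=> t _; apply/val_inj; case: t => [[|a s] //= _].
Qed.

Lemma sum_tuple_sum (T : finType) m (F : T -> nat) :
  \sum_(s : m.+1.-tuple T) \sum_(i <- s) F i = (m.+1 * #|T| ^ m * \sum_i F i)%N.
Proof.
elim: m => [|m IHm].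
  rewrite sum_tuple_cons mul1n expn0 mul1n; apply: eq_bigr => i _.
  by rewrite (big_pred1 [tuple]) => [|s]; rewrite ?[s]tuple0 ?eqxx //= big_seq1.
rewrite sum_tuple_cons.
under eq_bigr => i _ do under eq_bigr => s _ do rewrite big_cons.
under eq_bigr => i _ do rewrite big_split /= sum_nat_const card_tuple IHm.
rewrite big_split /= sum_nat_const -big_distrr /= expnS; ring.
Qed.

Lemma card_set_pair_sumr (A B : finType) (P : A -> B -> bool) :
  #|[set p : A * B | P p.1 p.2]| = \sum_(b : B) #|[set a | P a b]|.
Proof.
rewrite -sum1dep_card -(pair_big_dep xpredT P (fun _ _ => 1%N)) /=.
rewrite (exchange_big_dep xpredT) //=.
by apply: eq_bigr => b _; rewrite -sum1dep_card.
Qed.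

Lemma card_set_pair_suml (A B : finType) (P : A -> B -> bool) :
  #|[set p : A * B | P p.1 p.2]| = \sum_(a : A) #|[set b | P a b]|.
Proof.
rewrite -sum1dep_card -(pair_big_dep xpredT P (fun _ _ => 1%N)) /=.
by apply: eq_bigr => a _; rewrite -sum1dep_card.
Qed.

Lemma flipK n (i : 'I_n) : involutive (fun x => flip x i).
Proof. by move=> x; apply/ffunP => j; rewrite !ffunE; case: eqP => // _; rewrite negbK. Qed.

Section Walks.

Variables (n : nat) (f : cube n -> bool).

Definition influential_in (i : 'I_n) := #|[set x : cube n | f x != f (flip x i)]|.

Definition influential_pairs := #|[set p : cube n * 'I_n | f p.1 != f (flip p.1 p.2)]|.

Definition crossers (s : seq 'I_n) := #|[set x : cube n | ~~ avoids f x s]|.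

Lemma influential_pairsE : influential_pairs = \sum_i influential_in i.
Proof. exact: card_set_pair_sumr. Qed.

Lemma crossers_cons i s : (crossers (i :: s) <= influential_in i + crossers s)%N.
Proof.
have flip_crossers : crossers s = #|[set x : cube n | ~~ avoids f (flip x i) s]|.
  rewrite /crossers -(card_preimset _ (inv_inj (flipK i))).
  by apply: eq_card => x; rewrite !inE.
rewrite flip_crossers; apply: leq_trans (leq_card_setU _ _).
apply: subset_leq_card; apply/subsetP => x; rewrite !inE /= negb_and.
by case/orP => ->; rewrite ?orbT.
Qed.

Lemma crossers_le_sum s : (crossers s <= \sum_(i <- s) influential_in i)%N.
Proof.
elim: s => [|i s IHs].
  by rewrite big_nil /crossers leqn0 cards_eq0; apply/eqP/setP => x; rewrite !inE.
by rewrite big_cons; apply: leq_trans (crossers_cons i s) _; rewrite leq_add2l.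
Qed.

Lemma sum_crossers_le m :
  (\sum_(s : m.+1.-tuple 'I_n) crossers s <= m.+1 * n ^ m * influential_pairs)%N.
Proof.
rewrite influential_pairsE -[X in (_ <= _ * X ^ _ * _)%N]card_ord -sum_tuple_sum.
by apply: leq_sum => s _; apply: crossers_le_sum.
Qed.

Lemma sum_bad_walks l :
  \sum_(x : cube n) #|[set s : l.-tuple 'I_n | ~~ avoids f x s]|
  = \sum_(s : l.-tuple 'I_n) crossers s.
Proof.
by rewrite -card_set_pair_suml (card_set_pair_sumr (fun x (s : l.-tuple _) => ~~ avoids f x s)).
Qed.

Lemma nonsticky_bad_walks l x : (0 < n)%N -> ~~ sticky f l x ->
  (n ^ l <= 2 * #|[set s : l.-tuple 'I_n | ~~ avoids f x s]|)%N.
Proof.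
move=> n_gt0; rewrite /sticky /stay_prob -ltNge ltr_pdivrMr ?ltr0n ?expn_gt0 ?n_gt0 //.
have := cardsC [set s : l.-tuple 'I_n | avoids f x s].
have -> : ~: [set s : l.-tuple 'I_n | avoids f x s]
          = [set s : l.-tuple 'I_n | ~~ avoids f x s] by apply/setP => s; rewrite !inE.
rewrite card_tuple card_ord => card_walks lt_half.
suff : (2 * #|[set s : l.-tuple 'I_n | avoids f x s]| < n ^ l)%N by lia.
by rewrite -(ltr_nat rat) natrM; lra.
Qed.

Lemma nonsticky_count_le l : (0 < n)%N ->
  (#|[set x : cube n | ~~ sticky f l.+1 x]| * n <= 2 * l.+1 * influential_pairs)%N.
Proof.
move=> n_gt0; rewrite -(@leq_pmul2r (n ^ l)) ?expn_gt0 ?n_gt0 //.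
have markov : (#|[set x : cube n | ~~ sticky f l.+1 x]| * n ^ l.+1
               <= 2 * \sum_(s : l.+1.-tuple 'I_n) crossers s)%N.
  rewrite -sum_bad_walks big_distrr -sum1dep_card big_distrl /=.
  rewrite [X in (_ <= X)%N](bigID (fun x => ~~ sticky f l.+1 x)) /=.
  apply: leq_trans (leq_addr _ _); apply: leq_sum => x.
  by rewrite mul1n; apply: nonsticky_bad_walks.
have := leq_mul (leqnn 2) (sum_crossers_le l).
move: markov; rewrite expnS; nia.
Qed.

End Walks.

Local Open Scope ring_scope.

Lemma total_influenceE n (f : cube n -> bool) : (0 < n)%N ->
  total_influence f = (influential_pairs f)%:R / (2 ^ n)%:R.
Proof.
move=> n_gt0; rewrite /total_influence natrM -/(influential_pairs f); field.
by rewrite !pnatr_eq0 expn_eq0 -!lt0n n_gt0.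
Qed.

Theorem lemma3p4 (n : nat) (f : cube n -> bool) (l : nat) :
  (0 < n)%N -> (0 < l)%N ->
  #|[set x : cube n | ~~ sticky f l x]|%:R / (2 ^ n)%:R
    <= 2 * l%:R * total_influence f / n%:R :> rat.
Proof.
case: l => [//|l] n_gt0 _.
have n_pos : 0 < n%:R :> rat by rewrite ltr0n.
have pow_pos : 0 < (2 ^ n)%:R :> rat by rewrite ltr0n expn_gt0.
rewrite total_influenceE // ler_pdivrMr //.
have -> : 2 * l.+1%:R * ((influential_pairs f)%:R / (2 ^ n)%:R) / n%:R * (2 ^ n)%:R
          = (2 * l.+1 * influential_pairs f)%N%:R / n%:R :> rat.
  by rewrite !natrM; field; rewrite !lt0r_neq0.
by rewrite ler_pdivlMr // -natrM ler_nat nonsticky_count_le.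
Qed.
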